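(* For every fixed integer $r\ge1$, the ordinary generating function $T_r(z)=\sum_{c\ge0}T(r,c)z^c$ is a rational function of $z$.
   Context: A tatami tiling of the $r\times c$ rectangular grid is a tiling by monomers ($1\times1$ tiles) and dimers ($1\times2$ or $2\times1$ tiles) such that no point is a corner of four distinct tiles. $T(r,c)$ denotes the total number of tatami tilings of the $r\times c$ grid (with any number of monomers), with $T(r,0)=1$. *)

From mathcomp Require Import all_boot all_order all_algebra.
Set Implicit Arguments. Unset Strict Implicit. Unset Printing Implicit Defensive.
Import GRing.Theory Num.Theory.

Definition cell (r c : nat) := ('I_r * 'I_c)%type.

Section Tatami.
Variables r c : nat.

Definition adjacent (x y : cell r c) : bool :=
  ((nat_of_ord x.1 == y.1) && ((x.2 : nat).+1 == y.2)) ||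
  ((nat_of_ord x.2 == y.2) && ((x.1 : nat).+1 == y.1)).

Definition is_tile (t : {set cell r c}) : bool :=
  [exists x, t == [set x]] || [exists x, exists y, adjacent x y && (t == [set x; y])].

Definition is_tiling (P : {set {set cell r c}}) : bool :=
  partition P [set: cell r c] && [forall t in P, is_tile t].

(* no point is a corner of four distinct tiles: the only points that can be
   corners of four tiles are interior grid points, surrounded by the 2x2 block
   of cells a=(i,j), b=(i,j+1), d=(i+1,j), e=(i+1,j+1). *)
Definition no_four_corner (P : {set {set cell r c}}) : bool :=
  [forall a : cell r c, forall b : cell r c, forall d : cell r c, forall e : cell r c,
    ([&& nat_of_ord b.1 == a.1, (b.2 : nat) == (a.2).+1,
         (d.1 : nat) == (a.1).+1, nat_of_ord d.2 == a.2,
         (e.1 : nat) == (a.1).+1 & (e.2 : nat) == (a.2).+1]) ==>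
    ~~ [&& pblock P a != pblock P b, pblock P a != pblock P d,
           pblock P a != pblock P e, pblock P b != pblock P d,
           pblock P b != pblock P e & pblock P d != pblock P e]].

Definition is_tatami (P : {set {set cell r c}}) : bool :=
  is_tiling P && no_four_corner P.

End Tatami.

(* T(r,c): number of tatami tilings of the r x c grid (T(r,0) = 1 automatically:
   the empty partition of the empty grid). *)
Definition T (r c : nat) : nat := #|[set P : {set {set cell r c}} | is_tatami P]|.

(* The ordinary generating function sum_n a(n) z^n is a rational function:
   there are polynomials p, q (q <> 0) with q(z) * A(z) = p(z) as formal power series. *)
Local Open Scope ring_scope.
Definition rational_gf (a : nat -> nat) : Prop :=
  exists p q : {poly rat}, q != 0 /\
    forall n : nat, \sum_(i < n.+1) q`_i * (a (n - i)%N)%:R = p`_n.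

From mathcomp Require Import all_boot all_order all_algebra.
From mathcomp Require Import zify.
Set Implicit Arguments. Unset Strict Implicit. Unset Printing Implicit Defensive.
Import GRing.Theory.

(* Record a tiling by labelling each cell with the direction of the other cell
   of its tile (0 for a monomer).  Being a tatami tiling is then a local
   condition on these labels, involving only one column or two consecutive
   columns at a time.  So the tatami tilings of the r x (n+1) grid are the
   words of length n+1 over the finite alphabet of column labellings that are
   accepted by a finite automaton, and their number is u A^n v for a transfer
   matrix A.  By Cayley-Hamilton this sequence satisfies a linear recurrence
   whose characteristic polynomial is monic, so its generating function is
   rational. *)

Local Open Scope ring_scope.

Lemma rational_gf_of_recurrence (a : nat -> nat) (k N : nat) (chi : {poly rat}) :
  chi`_k = 1 ->
  (forall n, (N <= n)%N -> \sum_(j < k.+1) chi`_j * (a (n + j)%N)%:R = 0) ->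
  rational_gf a.
Proof.
move=> chik_1 rec_a.
(* The denominator is the reciprocal polynomial z^k chi(1/z), whose constant term is 1. *)
pose q : {poly rat} := \poly_(i < k.+1) chi`_(k - i).
pose S n := \sum_(i < n.+1) q`_i * (a (n - i)%N)%:R.
exists (\poly_(n < N + k) S n), q; split.
  apply/eqP => /(congr1 (fun p : {poly rat} => p`_0)).
  by rewrite coef_poly /= subn0 chik_1 coef0 => /eqP; rewrite oner_eq0.
move=> n; rewrite coef_poly; case: ifP => // /negbT; rewrite -leqNgt => le_Nk_n.
have le_k_n : (k.+1 <= n.+1)%N by lia.
rewrite /S (bigID (fun i : 'I_n.+1 => (i < k.+1)%N)) /=.
rewrite [X in _ + X]big1 ?addr0; last first.
  by move=> i /negbTE hi; rewrite /q coef_poly hi mul0r.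
rewrite -(big_ord_widen _ (fun i => q`_i * (a (n - i)%N)%:R) le_k_n).
rewrite -[RHS](rec_a (n - k)%N); last by lia.
rewrite -(big_mkord xpredT (fun i => q`_i * (a (n - i)%N)%:R)).
rewrite -(big_mkord xpredT (fun j => chi`_j * (a (n - k + j)%N)%:R)).
rewrite (big_nat_rev _ _ 0 k.+1) /=.
apply: eq_big_nat => i /andP [_ lt_i_k].
rewrite /q coef_poly add0n.
have -> : (k.+1 - i.+1 < k.+1)%N by lia.
congr (_ * _); first by congr (_`_ _); lia.
by congr (_%:R); congr a; lia.
Qed.

Lemma Cayley_Hamilton_coef n (A : 'M[rat]_n) :
  \sum_(j < n.+1) (char_poly A)`_j *: A ^+ j = 0.
Proof.
case: n A => [|n] A; first exact: flatmx0.
have := Cayley_Hamilton A.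
rewrite -{1}(coefK (char_poly A)) poly_def size_char_poly rmorph_sum /= => CH.
rewrite -[RHS]CH; apply: eq_bigr => i _.
by rewrite linearZ /= rmorphXn /= horner_mx_X.
Qed.

Lemma char_poly_recurrence n (A : 'M[rat]_n) (u : 'rV_n) (v : 'cV_n) m :
  \sum_(j < n.+1) (char_poly A)`_j * (u *m A ^+ (m + j) *m v) 0 0 = 0.
Proof.
have -> : \sum_(j < n.+1) (char_poly A)`_j * (u *m A ^+ (m + j) *m v) 0 0
   = (u *m A ^+ m *m (\sum_(j < n.+1) (char_poly A)`_j *: A ^+ j) *m v) 0 0.
  rewrite mulmx_sumr mulmx_suml summxE; apply: eq_bigr => j _.
  by rewrite -scalemxAr -scalemxAl [RHS]mxE exprD -mulmxE !mulmxA.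
by rewrite Cayley_Hamilton_coef mulmx0 mul0mx mxE.
Qed.

Section TransferMatrix.
Variables (S : finType) (R : rel S) (first last_ok : pred S).

Definition words n := [set t : n.+1.-tuple S |
  [&& first (thead t), path R (thead t) (behead t) & last_ok (last (thead t) (behead t))]].

Definition walks_from n s : nat :=
  \sum_(t : n.-tuple S) (path R s t && last_ok (last s t)).

Lemma sum_tupleS (V : nmodType) n (F : n.+1.-tuple S -> V) :
  \sum_(t : n.+1.-tuple S) F t = \sum_(y : S) \sum_(t : n.-tuple S) F [tuple of y :: t].
Proof.
rewrite pair_big /=.
rewrite (reindex (fun p : S * n.-tuple S => [tuple of p.1 :: p.2])) //=.
exists (fun t : n.+1.-tuple S => (thead t, [tuple of behead t])).
  by move=> [y t] _ /=; rewrite theadE; congr pair; apply: val_inj.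
by move=> t _; apply: val_inj => /=; case: t => [[|y s]].
Qed.

Lemma walks_from0 s : walks_from 0 s = last_ok s.
Proof.
rewrite /walks_from (eq_bigr (fun _ => (last_ok s : nat))); last by move=> t _; rewrite tuple0.
by rewrite sum_nat_const card_tuple expn0 mul1n.
Qed.

Lemma walks_fromS n s : walks_from n.+1 s = (\sum_(y : S) R s y * walks_from n y)%N.
Proof.
rewrite /walks_from sum_tupleS; apply: eq_bigr => y _ /=.
rewrite big_distrr /=; apply: eq_bigr => t _.
by case: (R s y); case: (path _ _ _); case: (last_ok _).
Qed.

Lemma card_wordsE n : #|words n| = (\sum_(s : S) first s * walks_from n s)%N.
Proof.
rewrite /words -sum1_card big_mkcond /= sum_tupleS; apply: eq_bigr => y _.
rewrite /walks_from big_distrr /=; apply: eq_bigr => t _; rewrite in_set theadE /=.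
by case: (first y); case: (path _ _ _); case: (last_ok _).
Qed.

Definition transfer_mx : 'M[rat]_#|S| :=
  \matrix_(i, j) (R (enum_val i) (enum_val j) : nat)%:R.
Definition first_row : 'rV[rat]_#|S| := \row_j (first (enum_val j) : nat)%:R.
Definition last_col : 'cV[rat]_#|S| := \col_i (last_ok (enum_val i) : nat)%:R.

Lemma sum_enum_val (F : S -> rat) : \sum_(i < #|S|) F (enum_val i) = \sum_(y : S) F y.
Proof. exact/esym/big_enum_val. Qed.

Lemma walks_from_mx n s :
  (walks_from n s)%:R = (transfer_mx ^+ n *m last_col) (enum_rank s) 0.
Proof.
elim: n s => [|n IHn] s.
  by rewrite walks_from0 expr0 mul1mx mxE enum_rankK.
rewrite walks_fromS exprS -mulmxA mxE natr_sum -sum_enum_val.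
apply: eq_bigr => i _.
by rewrite natrM IHn enum_valK [transfer_mx _ _]mxE enum_rankK.
Qed.

Lemma card_words_mx n :
  #|words n|%:R = (first_row *m transfer_mx ^+ n *m last_col) 0 0.
Proof.
rewrite card_wordsE -mulmxA mxE natr_sum -sum_enum_val.
by apply: eq_bigr => i _; rewrite natrM walks_from_mx enum_valK [first_row _ _]mxE.
Qed.

Lemma rational_gf_card_words (a : nat -> nat) :
  (forall n, a n.+1 = #|words n|) -> rational_gf a.
Proof.
move=> a_words; pose chi := char_poly transfer_mx.
apply: (@rational_gf_of_recurrence _ #|S| 1 chi).
  have := char_poly_monic transfer_mx; rewrite qualifE => /eqP.
  by rewrite lead_coefE size_char_poly.
move=> n n_gt0; rewrite -[RHS](char_poly_recurrence transfer_mx first_row last_col n.-1).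
apply: eq_bigr => j _; congr (_ * _).
by rewrite -card_words_mx -a_words; congr (a _)%:R; lia.
Qed.

End TransferMatrix.

Local Close Scope ring_scope.

Section Grid.
Variables r c : nat.
Local Notation cell := (cell r c).

(* [dir x y] is 1, 2, 3 or 4 when y is the right, left, lower or upper
   neighbour of x, and 0 when y is not a neighbour of x. *)
Definition dir (x y : cell) : nat :=
  if (x.1 == y.1 :> nat) && (y.2 == (x.2).+1 :> nat) then 1
  else if (x.1 == y.1 :> nat) && (x.2 == (y.2).+1 :> nat) then 2
  else if (y.1 == (x.1).+1 :> nat) && (x.2 == y.2 :> nat) then 3
  else if (x.1 == (y.1).+1 :> nat) && (x.2 == y.2 :> nat) then 4 else 0.

Lemma eq_cell (x y : cell) : (x.1 : nat) = y.1 -> (x.2 : nat) = y.2 -> x = y.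
Proof. by case: x y => [a b] [a' b'] /= /val_inj -> /val_inj ->. Qed.

Ltac dir_cases := rewrite /dir; repeat (case: ifP => /=); try (move=> *; lia).

Lemma dir_le4 x y : dir x y <= 4.
Proof. dir_cases. Qed.

Lemma dirxx x : dir x x = 0.
Proof. dir_cases. Qed.

Lemma dir_inj x y z : 0 < dir x y -> dir x y = dir x z -> y = z.
Proof. by move=> dxy_gt0 dxy_xz; apply: eq_cell; move: dxy_gt0 dxy_xz; dir_cases. Qed.

Lemma dir_gt0_sym x y : 0 < dir x y -> 0 < dir y x.
Proof. dir_cases. Qed.

Lemma dir_gt0_neq x y : 0 < dir x y -> x != y.
Proof. by apply: contraTneq => ->; rewrite dirxx. Qed.

Lemma adjacent_dir x y : adjacent x y = (dir x y == 1) || (dir x y == 3).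
Proof. rewrite /adjacent; dir_cases. Qed.

Lemma adjacent_dir_gt0 x y : adjacent x y -> 0 < dir x y.
Proof. rewrite adjacent_dir; dir_cases. Qed.

Lemma dir_coord x y :
  [/\ dir x y = 1 -> (y.1 : nat) = x.1 /\ (y.2 : nat) = (x.2).+1,
      dir x y = 2 -> (y.1 : nat) = x.1 /\ (x.2 : nat) = (y.2).+1,
      dir x y = 3 -> (y.1 : nat) = (x.1).+1 /\ (y.2 : nat) = x.2 &
      dir x y = 4 -> (x.1 : nat) = (y.1).+1 /\ (y.2 : nat) = x.2].
Proof. split; dir_cases. Qed.

Definition square (a b d e : cell) : bool :=
  [&& nat_of_ord b.1 == a.1, (b.2 : nat) == (a.2).+1,
      (d.1 : nat) == (a.1).+1, nat_of_ord d.2 == a.2,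
      (e.1 : nat) == (a.1).+1 & (e.2 : nat) == (a.2).+1].

Lemma square_dir a b d e : square a b d e ->
  [/\ dir a b = 1, dir a d = 3 & dir a e = 0] /\ [/\ dir b d = 0, dir b e = 3 & dir d e = 1].
Proof.
case/andP => /eqP h1 /and5P [/eqP h2 /eqP h3 /eqP h4 /eqP h5 /eqP h6].
split; split; dir_cases.
Qed.

Lemma square_neq a b d e : square a b d e -> (a != e) && (b != d).
Proof.
case/andP => /eqP h1 /and5P [/eqP h2 /eqP h3 /eqP h4 /eqP h5 /eqP h6].
by apply/andP; split; apply/eqP => h; subst; lia.
Qed.

(* The centre of a square  a b / d e  is a corner of four distinct tiles
   exactly when none of the dimers a-b, a-d, b-e, d-e is present. *)
Definition tatami_labelling (f : cell -> nat) : bool :=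
  [&& [forall x, (0 < f x) ==> [exists y, dir x y == f x]],
      [forall x, forall y, ((0 < f x) && (dir x y == f x)) ==> (f y == dir y x)] &
      [forall a, forall b, forall d, forall e,
         square a b d e ==> [|| f a == 1, f a == 3, f b == 3 | f d == 1]]].

Definition partner_dir (P : {set {set cell}}) (x : cell) : nat :=
  if [pick y in pblock P x | 0 < dir x y] is Some y then dir x y else 0.

Definition tile_of (f : cell -> nat) (x : cell) : {set cell} :=
  x |: [set y | (0 < f x) && (dir x y == f x)].

Lemma partner_dir_le4 P x : partner_dir P x <= 4.
Proof. by rewrite /partner_dir; case: pickP => // y _; apply: dir_le4. Qed.

Section Tiling.
Variable P : {set {set cell}}.
Hypothesis tiling_P : is_tiling P.

Lemma tiling_trivIset : trivIset P.
Proof. by case/andP: tiling_P => /and3P []. Qed.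

Lemma tiling_cover : cover P = [set: cell].
Proof. by case/andP: tiling_P => /and3P [/eqP]. Qed.

Lemma tiling_set0 : set0 \notin P.
Proof. by case/andP: tiling_P => /and3P []. Qed.

Lemma mem_pblock_tiling x : x \in pblock P x.
Proof. by rewrite mem_pblock tiling_cover inE. Qed.

Lemma pblock_tiling x : pblock P x \in P.
Proof. by apply: pblock_mem; rewrite tiling_cover inE. Qed.

Lemma pblock_shape x : pblock P x = [set x] \/
  exists2 y, 0 < dir x y & pblock P x = [set x; y].
Proof.
have := mem_pblock_tiling x.
case/andP: tiling_P => _ /forallP /(_ (pblock P x)); rewrite pblock_tiling /=.
case/orP => [/existsP [x0 /eqP ->] /set1P -> | ]; first by left.
case/existsP => x0 /existsP [y0 /andP [adj /eqP ->]] /set2P [->|->]; right.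
  by exists y0 => //; apply: adjacent_dir_gt0.
by exists x0; [apply/dir_gt0_sym/adjacent_dir_gt0 | rewrite setUC].
Qed.

Lemma partner_dir_monomer x : pblock P x = [set x] -> partner_dir P x = 0.
Proof.
move=> Px; rewrite /partner_dir; case: pickP => // y /andP [].
by rewrite Px => /set1P ->; rewrite dirxx.
Qed.

Lemma partner_dir_dimer x y :
  0 < dir x y -> pblock P x = [set x; y] -> partner_dir P x = dir x y.
Proof.
move=> dxy_gt0 Px; rewrite /partner_dir; case: pickP => [z /andP []|].
  by rewrite Px => /set2P [->|-> //]; rewrite dirxx.
by move/(_ y); rewrite Px set22 dxy_gt0.
Qed.

Lemma pblock_tile_of x : pblock P x = tile_of (partner_dir P) x.
Proof.
case: (pblock_shape x) => [Px | [y dxy_gt0 Px]].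
  by rewrite Px /tile_of partner_dir_monomer //; apply/setP => z; rewrite !inE orbF.
rewrite Px /tile_of (partner_dir_dimer dxy_gt0 Px) dxy_gt0 /=.
apply/setP => z; rewrite !inE; congr (_ || _).
by apply/eqP/eqP => [->//|/esym dxy_xz]; apply/esym/(dir_inj dxy_gt0 dxy_xz).
Qed.

Lemma same_pblock_partner u w : u != w -> pblock P u = pblock P w ->
  0 < partner_dir P u /\ dir u w = partner_dir P u.
Proof.
move=> neq_uw Pu_w; have : w \in pblock P u by rewrite Pu_w mem_pblock_tiling.
rewrite pblock_tile_of => /setU1P [eq_wu|]; first by rewrite eq_wu eqxx in neq_uw.
by rewrite inE => /andP [-> /eqP].
Qed.

Lemma partner_dir_exists x : 0 < partner_dir P x -> exists y, dir x y = partner_dir P x.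
Proof.
case: (pblock_shape x) => [Px | [y dxy_gt0 Px]]; first by rewrite partner_dir_monomer.
by exists y; rewrite (partner_dir_dimer dxy_gt0 Px).
Qed.

Lemma partner_dir_back x y :
  0 < partner_dir P x -> dir x y = partner_dir P x -> partner_dir P y = dir y x.
Proof.
case: (pblock_shape x) => [Px | [z dxz_gt0 Px]]; first by rewrite partner_dir_monomer.
rewrite (partner_dir_dimer dxz_gt0 Px) => _ dxy_xz.
have <- : z = y by apply: dir_inj dxz_gt0 (esym dxy_xz).
have Pz : pblock P z = pblock P x.
  by apply: same_pblock; [exact: tiling_trivIset | rewrite Px set22].
have : x \in pblock P z by rewrite Pz mem_pblock_tiling.
case: (pblock_shape z) => [-> /set1P exz | [w dzw_gt0 Pzw]].
  by move: dxz_gt0; rewrite exz dirxx.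
rewrite (partner_dir_dimer dzw_gt0 Pzw) Pzw => /set2P [exz | -> //].
by move: dxz_gt0; rewrite exz dirxx.
Qed.

Lemma tiling_tile_of : P = [set tile_of (partner_dir P) x | x in [set: cell]].
Proof.
apply/setP => B; apply/idP/imsetP => [PB | [x _ ->]]; last first.
  by rewrite -pblock_tile_of pblock_tiling.
have /set0Pn [x Bx] : B != set0 by apply: contraNneq tiling_set0 => <-.
exists x => //; rewrite -pblock_tile_of.
by apply/esym/def_pblock => //; exact: tiling_trivIset.
Qed.

End Tiling.

Lemma tatami_labelling_partner_dir P : is_tatami P -> tatami_labelling (partner_dir P).
Proof.
case/andP => tiling_P no4.
apply/and3P; split.
- apply/forallP => x; apply/implyP => /(partner_dir_exists tiling_P) [y dxy].
  by apply/existsP; exists y; rewrite dxy.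
- apply/forallP => x; apply/forallP => y; apply/implyP => /andP [fx_gt0 /eqP dxy].
  by rewrite (partner_dir_back tiling_P fx_gt0 dxy).
apply/forallP => a; apply/forallP => b; apply/forallP => d; apply/forallP => e.
apply/implyP => sq.
have [[dab dad dae] [dbd dbe dde]] := square_dir sq.
case/andP: (square_neq sq) => nae nbd.
have nab : a != b by apply: dir_gt0_neq; rewrite dab.
have nad : a != d by apply: dir_gt0_neq; rewrite dad.
have nbe : b != e by apply: dir_gt0_neq; rewrite dbe.
have nde : d != e by apply: dir_gt0_neq; rewrite dde.
have partner := same_pblock_partner tiling_P.
move/forallP: no4 => /(_ a) /forallP /(_ b) /forallP /(_ d) /forallP /(_ e) /implyP /(_ sq).
case/nandP => [/negbNE/eqP/(partner _ _ nab) [_ <-] | ]; first by rewrite dab.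
case/nandP => [/negbNE/eqP/(partner _ _ nad) [_ <-] | ]; first by rewrite dad orbT.
case/nandP => [/negbNE/eqP/(partner _ _ nae) | ]; first by rewrite dae => -[/[swap] <-].
case/nandP => [/negbNE/eqP/(partner _ _ nbd) | ]; first by rewrite dbd => -[/[swap] <-].
case/nandP => [/negbNE/eqP/(partner _ _ nbe) [_ <-] | /negbNE/eqP/(partner _ _ nde) [_ <-]].
  by rewrite dbe !orbT.
by rewrite dde !orbT.
Qed.


Section TilingOfLabelling.
Variable f : cell -> nat.
Hypothesis labelling_f : tatami_labelling f.

Lemma labelling_partner x : 0 < f x -> exists y, dir x y = f x.
Proof.
case/and3P: labelling_f => /forallP /(_ x) /implyP fx _ _ /fx /existsP [y /eqP dxy].
by exists y.
Qed.

Lemma labelling_back x y : 0 < f x -> dir x y = f x -> f y = dir y x.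
Proof.
case/and3P: labelling_f => _ /forallP /(_ x) /forallP /(_ y) /implyP fxy _ fx_gt0 dxy.
by apply/eqP/fxy; rewrite fx_gt0 dxy eqxx.
Qed.

Lemma labelling_square a b d e :
  square a b d e -> [|| f a == 1, f a == 3, f b == 3 | f d == 1].
Proof.
case/and3P: labelling_f => _ _ /forallP /(_ a) /forallP /(_ b) /forallP /(_ d) /forallP /(_ e).
by move/implyP.
Qed.

Lemma tile_of_dimer x y : 0 < f x -> dir x y = f x -> tile_of f x = [set x; y].
Proof.
move=> fx_gt0 dxy; rewrite /tile_of fx_gt0 /=; apply/setP => z; rewrite !inE.
congr (_ || _); apply/eqP/eqP => [dxz|->//]; apply/esym/(dir_inj (x := x) (y := y)).
  by rewrite dxy.
by rewrite dxz dxy.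
Qed.

Lemma tile_of_monomer x : f x = 0 -> tile_of f x = [set x].
Proof. by move=> fx0; rewrite /tile_of fx0; apply/setP => z; rewrite !inE orbF. Qed.

Lemma mem_tile_of x : x \in tile_of f x.
Proof. exact: setU11. Qed.

Lemma tile_of_mem x y : y \in tile_of f x -> tile_of f y = tile_of f x.
Proof.
case/setU1P => [-> //|]; rewrite inE => /andP [fx_gt0 /eqP dxy].
have fy := labelling_back fx_gt0 dxy.
rewrite (tile_of_dimer fx_gt0 dxy) (tile_of_dimer (y := x)) 1?setUC // fy.
by apply: dir_gt0_sym; rewrite dxy.
Qed.

Definition tiling_of := [set tile_of f x | x in [set: cell]].

Lemma tiling_of_trivIset : trivIset tiling_of.
Proof.
apply/trivIsetP => A B /imsetP [x _ ->] /imsetP [y _ ->] neq_xy.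
apply/pred0P => z /=; apply/negbTE/negP => /andP [zx zy].
by move/negP: neq_xy; apply; rewrite -(tile_of_mem zx) -(tile_of_mem zy).
Qed.

Lemma pblock_tiling_of x : pblock tiling_of x = tile_of f x.
Proof.
apply: def_pblock; first exact: tiling_of_trivIset.
  by apply/imsetP; exists x.
exact: mem_tile_of.
Qed.

Lemma tiling_tiling_of : is_tiling tiling_of.
Proof.
apply/andP; split.
  apply/and3P; split; last 1 first.
  - by apply/imsetP => -[x _ /esym x0]; move: (mem_tile_of x); rewrite x0 inE.
  - apply/eqP/setP => x; rewrite inE; apply/bigcupP; exists (tile_of f x).
      by apply/imsetP; exists x.
    exact: mem_tile_of.
  - exact: tiling_of_trivIset.
apply/forallP => B; apply/implyP => /imsetP [x _ ->].
case: (posnP (f x)) => [fx0 | fx_gt0].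
  by rewrite tile_of_monomer //; apply/orP; left; apply/existsP; exists x.
have [y dxy] := labelling_partner fx_gt0.
rewrite (tile_of_dimer fx_gt0 dxy); apply/orP; right.
have dyx_gt0 : 0 < dir y x by apply: dir_gt0_sym; rewrite dxy.
case/boolP: (adjacent x y) => adj_xy.
  by apply/existsP; exists x; apply/existsP; exists y; rewrite adj_xy eqxx.
apply/existsP; exists y; apply/existsP; exists x; rewrite setUC eqxx andbT.
by move: adj_xy dyx_gt0; rewrite !adjacent_dir; dir_cases.
Qed.

Lemma partner_dir_tiling_of x : partner_dir tiling_of x = f x.
Proof.
have tiling := tiling_tiling_of.
case: (posnP (f x)) => [fx0 | fx_gt0].
  by rewrite partner_dir_monomer // pblock_tiling_of tile_of_monomer.
have [y dxy] := labelling_partner fx_gt0.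
by rewrite (partner_dir_dimer (y := y)) ?dxy // pblock_tiling_of (tile_of_dimer fx_gt0 dxy).
Qed.

Lemma tatami_tiling_of : is_tatami tiling_of.
Proof.
apply/andP; split; first exact: tiling_tiling_of.
apply/forallP => a; apply/forallP => b; apply/forallP => d; apply/forallP => e.
apply/implyP => sq; have [[dab dad _] [_ dbe dde]] := square_dir sq.
have same_tile x y : dir x y = f x -> f x != 0 -> tile_of f y = tile_of f x.
  by move=> dxy fx_neq0; apply: tile_of_mem; rewrite !inE lt0n fx_neq0 dxy eqxx orbT.
rewrite !pblock_tiling_of.
case/or4P: (labelling_square sq) => /eqP fv.
- by rewrite (same_tile a b) ?fv ?eqxx.
- by rewrite (same_tile a d) ?fv ?eqxx ?andbF.
- by rewrite (same_tile b e) ?fv ?eqxx ?andbF.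
- by rewrite (same_tile d e) ?fv ?eqxx ?andbF.
Qed.

End TilingOfLabelling.

Definition grid_local (L : nat -> nat -> nat) (i j : nat) : bool :=
  [&& (L i j == 1) ==> (j.+1 < c) && (L i j.+1 == 2),
      (L i j == 2) ==> (0 < j) && (L i j.-1 == 1),
      (L i j == 3) ==> (i.+1 < r) && (L i.+1 j == 4),
      (L i j == 4) ==> (0 < i) && (L i.-1 j == 3) &
      ((i.+1 < r) && (j.+1 < c)) ==>
         [|| L i j == 1, L i j == 3, L i j.+1 == 3 | L i.+1 j == 1]].

Definition grid_ok (L : nat -> nat -> nat) : bool :=
  [forall i : 'I_r, forall j : 'I_c, grid_local L i j].

Definition mkcell (i j : nat) (lt_i_r : i < r) (lt_j_c : j < c) : cell :=
  (Ordinal lt_i_r, Ordinal lt_j_c).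

Section GridLabelling.
Variables (f : cell -> nat) (L : nat -> nat -> nat).
Hypothesis fL : forall x, f x = L x.1 x.2.

Lemma tatami_labelling_grid_ok : tatami_labelling f -> grid_ok L.
Proof.
move=> labelling_f; apply/forallP => i; apply/forallP => j.
pose x : cell := (i, j).
have partner k : L i j = k -> 0 < k -> exists2 y, dir x y = k & f y = dir y x.
  move=> Lk k_gt0; have fxk : f x = k by rewrite fL.
  have fx_gt0 : 0 < f x by rewrite fxk.
  have [y dxy] := labelling_partner labelling_f fx_gt0.
  by exists y; [rewrite -fxk | exact: (labelling_back labelling_f fx_gt0 dxy)].
apply/and5P; split; apply/implyP.
- move/eqP/partner => /(_ isT) [y dxy fy]; have [/(_ dxy) [e1 e2] _ _ _] := dir_coord x y.
  rewrite /= in e1 e2; have := ltn_ord y.2; rewrite e2 => -> /=.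
  by rewrite -e1 -e2 -[L _ _]/(L y.1 y.2) -fL fy; apply/eqP; move: dxy; dir_cases.
- move/eqP/partner => /(_ isT) [y dxy fy]; have [_ /(_ dxy) [e1 e2] _ _] := dir_coord x y.
  rewrite /= in e1 e2; rewrite e2 /= -e1 -[L _ _]/(L y.1 y.2) -fL fy.
  by apply/eqP; move: dxy; dir_cases.
- move/eqP/partner => /(_ isT) [y dxy fy]; have [_ _ /(_ dxy) [e1 e2] _] := dir_coord x y.
  rewrite /= in e1 e2; have := ltn_ord y.1; rewrite e1 => -> /=.
  by rewrite -e1 -e2 -[L _ _]/(L y.1 y.2) -fL fy; apply/eqP; move: dxy; dir_cases.
- move/eqP/partner => /(_ isT) [y dxy fy]; have [_ _ _ /(_ dxy) [e1 e2]] := dir_coord x y.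
  rewrite /= in e1 e2; rewrite e1 /= -e2 -[L _ _]/(L y.1 y.2) -fL fy.
  by apply/eqP; move: dxy; dir_cases.
case/andP => lt_i1_r lt_j1_c.
pose b := mkcell (ltn_ord i) lt_j1_c; pose d := mkcell lt_i1_r (ltn_ord j).
have := labelling_square labelling_f (b := b) (d := d) (e := mkcell lt_i1_r lt_j1_c) (a := x).
by rewrite /square /= !eqxx !fL => /(_ isT).
Qed.

Lemma grid_ok_tatami_labelling :
  (forall (i : 'I_r) (j : 'I_c), L i j <= 4) -> grid_ok L -> tatami_labelling f.
Proof.
move=> L_le4 /forallP grid_L.
have local (x : cell) : grid_local L x.1 x.2 by move/forallP: (grid_L x.1).
apply/and3P; split.
- apply/forallP => x; apply/implyP; rewrite fL.
  move: (local x) (L_le4 x.1 x.2) => /and5P [g1 g2 g3 g4 _].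
  case E: (L x.1 x.2) => [|[|[|[|[|k]]]]] //= _ _.
  + move: g1; rewrite E => /andP [lt_j1_c _].
    by apply/existsP; exists (mkcell (ltn_ord x.1) lt_j1_c); apply/eqP; dir_cases.
  + move: g2; rewrite E => /andP [j_gt0 _].
    have lt_j1_c : (x.2).-1 < c by apply: leq_ltn_trans (leq_pred _) (ltn_ord _).
    by apply/existsP; exists (mkcell (ltn_ord x.1) lt_j1_c); apply/eqP; move: j_gt0; dir_cases.
  + move: g3; rewrite E => /andP [lt_i1_r _].
    by apply/existsP; exists (mkcell lt_i1_r (ltn_ord x.2)); apply/eqP; dir_cases.
  + move: g4; rewrite E => /andP [i_gt0 _].
    have lt_i1_r : (x.1).-1 < r by apply: leq_ltn_trans (leq_pred _) (ltn_ord _).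
    by apply/existsP; exists (mkcell lt_i1_r (ltn_ord x.2)); apply/eqP; move: i_gt0; dir_cases.
- apply/forallP => x; apply/forallP => y; rewrite !fL.
  apply/implyP => /andP [fx_gt0 /eqP dxy].
  move: (local x) (dir_le4 x y) => /and5P [g1 g2 g3 g4 _].
  have [D1 D2 D3 D4] := dir_coord x y.
  case D: (dir x y) dxy => [|[|[|[|[|k]]]]] dxy;
    move: fx_gt0 g1 g2 g3 g4; rewrite -dxy //= => _ g1 g2 g3 g4 _.
  + move: g1 => /andP [_ /eqP g]; have [-> ->] := D1 D.
    by rewrite g; apply/eqP; move: D; dir_cases.
  + move: g2 => /andP [_ /eqP]; have [e1 e2] := D2 D.
    by rewrite e2 /= e1 => ->; apply/eqP; move: D; dir_cases.
  + move: g3 => /andP [_ /eqP g]; have [-> ->] := D3 D.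
    by rewrite g; apply/eqP; move: D; dir_cases.
  + move: g4 => /andP [_ /eqP]; have [e1 e2] := D4 D.
    by rewrite e1 /= e2 => ->; apply/eqP; move: D; dir_cases.
apply/forallP => a; apply/forallP => b; apply/forallP => d; apply/forallP => e.
apply/implyP => sq; rewrite !fL.
case/andP: (sq) => /eqP -> /and5P [/eqP -> /eqP -> /eqP -> /eqP e1 /eqP e2].
move: (local a) => /and5P [_ _ _ _ /implyP]; apply.
by rewrite -e1 -e2 !ltn_ord.
Qed.

End GridLabelling.

End Grid.

Section Columns.
Variable r : nat.

Definition column := {ffun 'I_r -> 'I_5}.
Definition column0 : column := [ffun _ => ord0].

Definition col_label (s : column) (i : nat) : nat :=
  if @insub nat (fun k => k < r) _ i is Some i' then val (s i') else 0.

Lemma col_labelE (s : column) (i : 'I_r) : col_label s i = s i.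
Proof. by rewrite /col_label valK. Qed.

Lemma col_label_le4 (s : column) i : col_label s i <= 4.
Proof. by rewrite /col_label; case: insub => // i'; have := ltn_ord (s i'). Qed.

Definition grid_label (t : seq column) (i j : nat) : nat := col_label (nth column0 t j) i.

End Columns.

Section ColumnsOfTiling.
Variables r c : nat.

Definition columns_of (P : {set {set cell r c}}) : c.-tuple (column r) :=
  [tuple [ffun i : 'I_r => inord (partner_dir P (i, j)) : 'I_5] | j < c].

Lemma grid_label_columns_of P (i : 'I_r) (j : 'I_c) :
  grid_label (columns_of P) i j = partner_dir P (i, j).
Proof.
rewrite /grid_label -tnth_nth tnth_mktuple col_labelE ffunE inordK //.
by rewrite ltnS partner_dir_le4.
Qed.

Lemma T_grid_ok : T r c = #|[set t : c.-tuple (column r) | grid_ok r c (grid_label t)]|.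
Proof.
rewrite /T -(card_in_imset (f := columns_of)).
  apply: eq_card => t; rewrite [in RHS]inE; apply/imsetP/idP.
    case=> P; rewrite inE => tatami_P ->.
    apply: (@tatami_labelling_grid_ok _ _ (partner_dir P)).
      by case=> i j; rewrite grid_label_columns_of.
    exact: tatami_labelling_partner_dir.
  move=> grid_t; pose f (x : cell r c) := grid_label t x.1 x.2.
  have labelling_f : tatami_labelling f.
    by apply: grid_ok_tatami_labelling grid_t => // i j; apply: col_label_le4.
  exists (tiling_of f); first by rewrite inE; apply: tatami_tiling_of.
  apply: eq_from_tnth => j; rewrite tnth_mktuple; apply/ffunP => i; rewrite ffunE.
  apply: val_inj; rewrite /= partner_dir_tiling_of // inordK /f /grid_label.
    by rewrite -tnth_nth col_labelE.
  by rewrite ltnS col_label_le4.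
move=> P Q; rewrite !inE => /andP [tiling_P _] /andP [tiling_Q _] PQ.
have eq_dir x : partner_dir P x = partner_dir Q x.
  by case: x => i j; rewrite -!grid_label_columns_of PQ.
rewrite (tiling_tile_of tiling_P) (tiling_tile_of tiling_Q); apply: eq_imset => x.
by rewrite /tile_of !eq_dir.
Qed.

End ColumnsOfTiling.

Section ColumnWords.
Variables r n : nat.
Local Notation col_label := (@col_label r).
Local Notation column0 := (column0 r).

Definition column_ok (s : column r) : bool := [forall i : 'I_r,
  ((col_label s i == 3) ==> (i.+1 < r) && (col_label s i.+1 == 4)) &&
  ((col_label s i == 4) ==> (0 < i) && (col_label s i.-1 == 3))].

Definition adjacent_columns_ok (s s' : column r) : bool := [forall i : 'I_r,
  ((col_label s i == 1) == (col_label s' i == 2)) &&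
  ((i.+1 < r) ==> [|| col_label s i == 1, col_label s i == 3,
                      col_label s' i == 3 | col_label s i.+1 == 1])].

Definition no_left (s : column r) : bool := [forall i : 'I_r, col_label s i != 2].
Definition no_right (s : column r) : bool := [forall i : 'I_r, col_label s i != 1].
Definition first_column_ok (s : column r) : bool := column_ok s && no_left s.
Definition column_step (s s' : column r) : bool := adjacent_columns_ok s s' && column_ok s'.

Definition column_word_ok (t : seq (column r)) : bool :=
  [&& [forall j : 'I_n.+1, column_ok (nth column0 t j)],
      [forall j : 'I_n, adjacent_columns_ok (nth column0 t j) (nth column0 t j.+1)],
      no_left (nth column0 t 0) & no_right (nth column0 t n)].

Lemma path_column_word_ok (t : n.+1.-tuple (column r)) :
  [&& first_column_ok (thead t), path column_step (thead t) (behead t)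
    & no_right (last (thead t) (behead t))] = column_word_ok t.
Proof.
have t_cons : val t = thead t :: behead t by case: t => [[|x p]].
have size_p : size (behead t) = n by rewrite size_behead size_tuple.
have nthS k : nth column0 t k.+1 = nth column0 (behead t) k by rewrite t_cons.
have nth0 : nth column0 t 0 = thead t by rewrite t_cons.
have nth_last : nth column0 t n = last (thead t) (behead t).
  have := nth_last column0 (thead t :: behead t).
  by rewrite /= size_p => <-; rewrite t_cons.
rewrite /column_word_ok nth0 nth_last.
move: (thead t) (behead t) t_cons size_p nthS nth0 {nth_last} => x p t_cons size_p nthS nth0.
apply/idP/idP.
  case/and3P => /andP [col_x left_x] /(pathP column0) path_p right_p.
  apply/and4P; split => //.
  - apply/forallP => -[[|k] lt_k_n] /=; first by rewrite nth0.
    by rewrite nthS; have := path_p k; rewrite size_p => /(_ lt_k_n) /andP [].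
  - apply/forallP => -[k lt_k_n] /=; rewrite nthS.
    have := path_p k; rewrite size_p => /(_ lt_k_n) /andP [] /=.
    by case: k {lt_k_n path_p} => [|k] /=; rewrite ?nth0 // -nthS.
case/and4P => /forallP col_t /forallP adj_t left_x right_p.
apply/and3P; split => //.
  by rewrite /first_column_ok left_x andbT; have := col_t ord0; rewrite /= nth0.
apply/(pathP column0) => k; rewrite size_p => lt_k_n; apply/andP; split.
  by have := adj_t (Ordinal lt_k_n); rewrite /= nthS t_cons.
have lt_k1_n1 : k.+1 < n.+1 by [].
by have := col_t (Ordinal lt_k1_n1); rewrite /= nthS.
Qed.

Lemma grid_ok_column_word (t : seq (column r)) :
  grid_ok r n.+1 (grid_label t) = column_word_ok t.
Proof.
apply/idP/idP => [grid_t | ].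
  have local (i : 'I_r) (j : 'I_n.+1) := forallP (forallP grid_t i) j.
  apply/and4P; split.
  - apply/forallP => j; apply/forallP => i.
    by case/and5P: (local i j) => _ _ -> -> _.
  - apply/forallP => j; apply/forallP => i.
    have lt_j_n1 : j < n.+1 by apply: ltn_trans (ltn_ord j) _.
    have lt_j1_n1 : j.+1 < n.+1 by rewrite ltnS.
    case/and5P: (local i (Ordinal lt_j_n1)) => /= g1 _ _ _ g5.
    case/and5P: (local i (Ordinal lt_j1_n1)) => /= _ g2 _ _ _.
    apply/andP; split; last by apply/implyP => lt_i1_r; apply: (implyP g5); rewrite lt_i1_r.
    apply/eqP; apply/idP/idP => [e | e]; last by move: g2; rewrite e.
    by move: g1; rewrite e /= => /andP [].
  - apply/forallP => i; case/and5P: (local i ord0) => _ g2 _ _ _.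
    by apply/negP => e; move: g2; rewrite /grid_label /= e.
  - apply/forallP => i; case/and5P: (local i ord_max) => g1 _ _ _ _.
    by apply/negP => e; move: g1; rewrite /grid_label /= ltnn e.
case/and4P => /forallP col_t /forallP adj_t /forallP left_t /forallP right_t.
apply/forallP => i; apply/forallP => j.
case/forallP/(_ i)/andP: (col_t j) => c3 c4.
apply/and5P; split => //.
- apply/implyP => e; case: (ltnP j n) => [lt_j_n | le_n_j].
    case/forallP/(_ i)/andP: (adj_t (Ordinal lt_j_n)) => /eqP /= adj _.
    by rewrite ltnS lt_j_n /grid_label -adj; exact: e.
  have eq_jn : (j : nat) = n by have := ltn_ord j; lia.
  by move: e (right_t i); rewrite /grid_label eq_jn => ->.
- apply/implyP => e; case: j c3 c4 e => [[|k] lt_k_n1] /= c3 c4 e.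
    by move: e (left_t i); rewrite /grid_label => ->.
  have lt_k_n : k < n by [].
  by case/forallP/(_ i)/andP: (adj_t (Ordinal lt_k_n)) => /eqP /= ->.
- apply/implyP => /andP [lt_i1_r lt_j1_n1].
  by case/forallP/(_ i)/andP: (adj_t (Ordinal (lt_j1_n1 : j < n))) => _ /implyP; apply.
Qed.

End ColumnWords.

Lemma T_card_words r n :
  T r n.+1 = #|words (@column_step r) (@first_column_ok r) (@no_right r) n|.
Proof.
rewrite T_grid_ok /words; apply: eq_card => t.
by rewrite !inE grid_ok_column_word -path_column_word_ok.
Qed.

Theorem theorem3 (r : nat) (hr : 1 <= r) : rational_gf (fun c => T r c).
Proof. exact/rational_gf_card_words/T_card_words. Qed.
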